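(* Let $n$ be even and consider the problem BPAOAZ (defined in the context). The expected running time of $\text{EMPMO}_{\text{payoff}}$ applied to BPAOAZ is bounded by $O(n\log n)$.
   Context: BPAOAZ: for $\mathbf{x}=(x_1,\dots,x_n)\in\{0,1\}^n$ with $n$ even, party 1 has objectives $f_{11}(\mathbf{x})=\sum_{i=n/2+1}^{n}x_i$ and $f_{12}(\mathbf{x})=\sum_{i=1}^{n/2}x_i+\sum_{i=n/2+1}^{n}(1-x_i)$; party 2 has objectives $f_{21}(\mathbf{x})=\sum_{i=1}^{n/2}(1-x_i)+\sum_{i=n/2+1}^{n}x_i$ and $f_{22}(\mathbf{x})=\sum_{i=1}^{n/2}x_i$; all objectives are maximized. The common Pareto set (solutions Pareto optimal for both parties) is $\{1^n\}$. One-bit mutation flips one uniformly random bit. Multi-party payoff: for party $m\in\{1,2\}$ and solutions $\mathbf{x},\mathbf{x}'$, $\pi_m(\mathbf{x},\mathbf{x}')=1$ if $f_{mk}(\mathbf{x}')\ge f_{mk}(\mathbf{x})$ for all $k\in\{1,2\}$; $\pi_m(\mathbf{x},\mathbf{x}')=-1$ if (not the previous case and) $f_{mk}(\mathbf{x}')\le f_{mk}(\mathbf{x})$ for all $k$; and $0$ otherwise. The multi-party payoff is $\pi_{\mathbf{x},\mathbf{x}'}=\pi_1(\mathbf{x},\mathbf{x}')+\pi_2(\mathbf{x},\mathbf{x}')$. $\text{EMPMO}_{\text{payoff}}$: choose $\mathbf{x}$ uniformly from $\{0,1\}^n$, $P=\{\mathbf{x}\}$. Each iteration: pick $\mathbf{x}\in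 P$ uniformly at random, apply one-bit mutation to get $\mathbf{x}'$, and if $\pi_{\mathbf{x},\mathbf{x}'}>0$ set $P\leftarrow(P\setminus\{\mathbf{x}\})\cup\{\mathbf{x}'\}$. The running time is the number of fitness evaluations (mutations) until the common Pareto-optimal solution is included in the population for the first time. *)

From HB Require Import structures.
From mathcomp Require Import all_boot all_order all_algebra.
From mathcomp Require Import reals exp.
Set Implicit Arguments. Unset Strict Implicit. Unset Printing Implicit Defensive.
Import Order.TTheory GRing.Theory Num.Theory.

(* Bit strings x = (x_1,...,x_n) in {0,1}^n; bit x_{i+1} is x i, i : 'I_n. *)
Definition bits (n : nat) := {ffun 'I_n -> bool}.

(* first half: 1-based indices 1..n/2, i.e. 0-based i < n/2 *)
Definition fstHalf n (i : 'I_n) : bool := (i < n %/ 2)%N.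

(* BPAOAZ objectives (all maximized) *)
Definition f11 n (x : bits n) : nat := #|[pred i | ~~ fstHalf i & x i]|.
Definition f12 n (x : bits n) : nat :=
  #|[pred i | fstHalf i & x i]| + #|[pred i | ~~ fstHalf i & ~~ x i]|.
Definition f21 n (x : bits n) : nat :=
  #|[pred i | fstHalf i & ~~ x i]| + #|[pred i | ~~ fstHalf i & x i]|.
Definition f22 n (x : bits n) : nat := #|[pred i | fstHalf i & x i]|.

Definition obj n (m k : bool) (x : bits n) : nat :=
  match m, k with
  | false, false => f11 x | false, true => f12 x
  | true, false => f21 x | true, true => f22 x end.

Definition party_payoff n (m : bool) (x x' : bits n) : int :=
  if [forall k : bool, obj m k x <= obj m k x']%N then 1%R
  else if [forall k : bool, obj m k x' <= obj m k x]%N then (-1)%R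
  else 0%R.

Definition payoff n (x x' : bits n) : int :=
  (party_payoff false x x' + party_payoff true x x')%R.

Definition flip n (x : bits n) (i : 'I_n) : bits n :=
  [ffun j => if j == i then ~~ x j else x j].

(* one iteration of EMPMO_payoff when bit i is chosen for mutation
   (the population is always a singleton {x}) *)
Definition step n (x : bits n) (i : 'I_n) : bits n :=
  if (0 < payoff x (flip x i))%R then flip x i else x.

Definition ones n : bits n := [ffun => true].

Section Chain.
Variable R : realType.
Local Open Scope ring_scope.

Definition trans n (x y : bits n) : R :=
  (#|[pred i : 'I_n | step x i == y]|)%:R / n%:R.

(* surv n t y = Pr[ after t mutations the population is {y} and the
   common Pareto optimum 1^n has not been in the population at any time <= t ],
   initial x uniform on {0,1}^n *)
Fixpoint surv (n : nat) (t : nat) (y : bits n) : R :=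
  if y == ones n then 0 else
  match t with
  | 0 => (#|{: bits n}|%:R)^-1
  | t'.+1 => \sum_(x : bits n) @surv n t' x * trans x y
  end.

(* Pr[T > t], T = running time (number of fitness evaluations) *)
Definition tail_prob n (t : nat) : R := \sum_(y : bits n) @surv n t y.

(* E[T] = sum_{t >= 0} Pr[T > t]; its partial sums *)
Definition exp_time_partial n (N : nat) : R := \sum_(t < N) tail_prob n t.
End Chain.

(* Flipping a 0 into a 1 always has payoff +1: in the first half it weakly
   improves both objectives of party 1, in the second half both objectives of
   party 2, while the other party sees incomparable vectors.  Flipping a 1 into
   a 0 symmetrically has payoff -1.  Hence the search is a coupon collector: with
   z zeros left, one of them disappears with probability z/n.  The potential
   n (1 + ln z) then drops by at least 1 per step in expectation, because
   ln z - ln (z - 1) >= 1/z, and the additive drift argument bounds the expected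
   running time by its initial value, at most n (1 + ln n). *)

From HB Require Import structures.
From mathcomp Require Import all_boot all_order all_algebra.
From mathcomp Require Import reals exp.
From mathcomp Require Import zify ring lra.
Import Order.TTheory GRing.Theory Num.Theory.
Set Implicit Arguments. Unset Strict Implicit. Unset Printing Implicit Defensive.

Section AdditiveDrift.
Local Open Scope ring_scope.
Variables (R : realFieldType) (T : finType) (P : T -> T -> R) (opt : T).
Variables (s : nat -> T -> R) (V : T -> R).
Hypothesis s_ge0 : forall t y, 0 <= s t y.
Hypothesis s_opt : forall t, s t opt = 0.
Hypothesis s_succ : forall t y, y != opt -> s t.+1 y = \sum_x s t x * P x y.
Hypothesis V_ge0 : forall x, 0 <= V x.
Hypothesis V_opt : V opt = 0.
Hypothesis V_drift : forall x, x != opt -> \sum_y P x y * V y <= V x - 1.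

Let pot t := \sum_y s t y * V y.

Lemma pot_succ t : pot t.+1 + \sum_y s t y <= pot t.
Proof.
have -> : pot t.+1 = \sum_x s t x * \sum_y P x y * V y.
  rewrite /pot (eq_bigr (fun y => (\sum_x s t x * P x y) * V y)); last first.
    by move=> y _; case: (eqVneq y opt) => [->|/s_succ ->]; rewrite ?V_opt ?mulr0.
  under eq_bigr do rewrite mulr_suml.
  rewrite exchange_big; apply: eq_bigr => x _ /=.
  by rewrite mulr_sumr; apply: eq_bigr => y _; rewrite mulrA.
rewrite -lerBrDl /pot -sumrB; apply: ler_sum => x _.
case: (eqVneq x opt) => [->|/V_drift hx]; first by rewrite s_opt !mul0r subr0.
rewrite -mulrBr -[leLHS]mulr1 ler_wpM2l //; lra.
Qed.

Lemma additive_drift N : \sum_(t < N) \sum_y s t y <= \sum_y s 0 y * V y.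
Proof.
suff : \sum_(t < N) \sum_y s t y <= pot 0 - pot N.
  have : 0 <= pot N by apply: sumr_ge0 => y _; rewrite mulr_ge0.
  rewrite /pot; lra.
elim: N => [|N IH]; first by rewrite big_ord0 subrr.
rewrite big_ord_recr /=; have := pot_succ N; move: IH; rewrite /pot; lra.
Qed.

End AdditiveDrift.

Section Acceptance.
Variable n : nat.
Implicit Types (x : bits n) (i : 'I_n).

Definition half_count x (h b : bool) : nat :=
  #|[pred j | (fstHalf j == h) && (x j == b)]|.

Lemma half_count_flip x i h b :
  half_count (flip x i) h b + ((fstHalf i == h) && (x i == b)) =
  half_count x h b + ((fstHalf i == h) && (~~ x i == b)).
Proof.
rewrite /half_count (cardD1 i [pred j | _ && (flip x i j == b)]).
rewrite (cardD1 i [pred j | _ && (x j == b)]).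
have -> : #|[predD1 [pred j | (fstHalf j == h) && (flip x i j == b)] & i]| =
          #|[predD1 [pred j | (fstHalf j == h) && (x j == b)] & i]|.
  by apply: eq_card => j; rewrite !inE ffunE; case: (eqVneq j i).
rewrite !inE ffunE eqxx.
by set u := nat_of_bool _; set v := nat_of_bool _; set w := #|_|; lia.
Qed.

Lemma f11E x : f11 x = half_count x false true.
Proof. by apply: eq_card => j; rewrite !inE; case: fstHalf; case: (x j). Qed.

Lemma f12E x : f12 x = half_count x true true + half_count x false false.
Proof. by congr addn; apply: eq_card => j; rewrite !inE; case: fstHalf; case: (x j). Qed.

Lemma f21E x : f21 x = half_count x true false + half_count x false true.
Proof. by congr addn; apply: eq_card => j; rewrite !inE; case: fstHalf; case: (x j). Qed.

Lemma f22E x : f22 x = half_count x true true.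
Proof. by apply: eq_card => j; rewrite !inE; case: fstHalf; case: (x j). Qed.

Lemma forall_boolE (P : pred bool) : [forall k, P k] = P false && P true.
Proof. by apply/forallP/andP => [H | [H1 H2] [] //]; split; apply: H. Qed.

Lemma payoff_flip x i : payoff x (flip x i) = (if x i then -1 else 1)%R.
Proof.
have := half_count_flip x i true true; have := half_count_flip x i true false.
have := half_count_flip x i false true; have := half_count_flip x i false false.
rewrite /payoff /party_payoff !forall_boolE /obj !f11E !f12E !f21E !f22E.
case: (fstHalf i); case: (x i) => /= e1 e2 e3 e4;
repeat match goal with |- context [if ?c then _ else _] =>
  let E := fresh in case E: c end; rewrite //=; lia.
Qed.

Lemma stepE x i : step x i = if x i then x else flip x i.
Proof. by rewrite /step payoff_flip; case: (x i). Qed.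

End Acceptance.

Section Zeros.
Variable n : nat.
Implicit Types (x : bits n) (i : 'I_n).

Definition zeros x : nat := #|[pred j | ~~ x j]|.

Lemma zeros_flip x i : x i = false -> (zeros (flip x i)).+1 = zeros x.
Proof.
move=> xi; rewrite /zeros (cardD1 i [pred j | ~~ flip x i j]).
rewrite (cardD1 i [pred j | ~~ x j]).
rewrite !inE ffunE eqxx xi; congr _.+1.
by apply: eq_card => j; rewrite !inE ffunE; case: (eqVneq j i).
Qed.

Lemma zeros_ones : zeros (ones n) = 0.
Proof. by apply: eq_card0 => j; rewrite !inE ffunE. Qed.

Lemma zeros_le x : zeros x <= n.
Proof. by rewrite -[n in _ <= n]card_ord max_card. Qed.

Lemma zeros_gt0 x : x != ones n -> 0 < zeros x.
Proof.
apply: contraNT; rewrite lt0n negbK => /eqP/card0_eq z0.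
by apply/eqP/ffunP => j; rewrite ffunE; have := z0 j; rewrite !inE; case: (x j).
Qed.

End Zeros.

Local Open Scope ring_scope.

Section HarmonicBound.
Variable R : realType.

Definition harm (z : nat) : R := if z is 0 then 0 else 1 + ln z%:R.

Lemma harm_ge0 z : 0 <= harm z.
Proof. by case: z => [|z] //=; rewrite addr_ge0 ?ln_ge0 ?ler1n. Qed.

Lemma harm_le n z : (0 < n)%N -> (z <= n)%N -> harm z <= 1 + ln n%:R.
Proof.
move=> n_gt0; case: z => [_|z zn] /=; first by rewrite addr_ge0 ?ln_ge0 ?ler1n.
by rewrite lerD2l ler_ln ?posrE ?ltr0n ?ler_nat.
Qed.

Lemma harm_pred z : (0 < z)%N -> harm z.-1 + z%:R^-1 <= harm z.
Proof.
case: z => [//|[|k]] _ /=; first by rewrite ln1 invr1 add0r addr0.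
set m : R := k.+2%:R.
have m_gt1 : 1 < m by rewrite ltr1n.
have km : k.+1%:R = m * (1 - m^-1).
  by rewrite mulrBr mulr1 mulfV ?gt_eqF ?(lt_trans ltr01) // /m [in RHS]mulrSr addrK.
have ln_le : ln (1 - m^-1) <= - m^-1.
  by rewrite le_ln1Dx // ltrN2 invf_lt1 ?(lt_trans ltr01).
rewrite km lnM ?posrE ?subr_gt0 ?invf_lt1 ?(lt_trans ltr01) //.
by move: ln_le; set u := m^-1; set v := ln _; lra.
Qed.

Lemma half_le_ln n : (2 <= n)%N -> 2^-1 <= ln (n%:R : R).
Proof.
move=> n_ge2; have n_gt0 : (0 : R) < n%:R by rewrite ltr0n; lia.
have : ln (1 + (n%:R^-1 - 1)) <= n%:R^-1 - 1 :> R.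
  by rewrite le_ln1Dx // ltrBrDr addNr invr_gt0.
rewrite addrC subrK lnV ?posrE //.
have : (n%:R : R)^-1 <= 2^-1 by rewrite lef_pV2 ?posrE ?ler_nat.
lra.
Qed.

End HarmonicBound.

Section BPAOAZChain.
Variables (R : realType) (n : nat).
Implicit Types (x y : bits n) (i : 'I_n).

Lemma trans_ge0 x y : 0 <= trans R x y.
Proof. by rewrite divr_ge0 ?ler0n. Qed.

Lemma surv_ge0 t y : 0 <= surv R t y.
Proof.
elim: t y => [|t IH] y /=; case: eqP => _ //; first by rewrite invr_ge0.
by apply: sumr_ge0 => x _; rewrite mulr_ge0 ?IH ?trans_ge0.
Qed.

Lemma surv_ones t : surv R t (ones n) = 0.
Proof. by case: t => [|t] /=; rewrite eqxx. Qed.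

Lemma surv_succ t y : y != ones n -> surv R t.+1 y = \sum_x surv R t x * trans R x y.
Proof. by move=> /negbTE /= ->. Qed.

Lemma sum_trans x (F : bits n -> R) :
  \sum_y trans R x y * F y = n%:R^-1 * \sum_i F (step x i).
Proof.
rewrite (partition_big (step x) predT) //= mulr_sumr; apply: eq_bigr => y _.
rewrite (eq_bigr (fun=> F y)) => [|i /eqP -> //].
rewrite /trans sumr_const -[F y *+ _]mulr_natr.
have -> : #|(fun i => step x i == y)| = #|[pred i | step x i == y]| by apply: eq_card.
by rewrite mulrAC mulrC (mulrC (F y)).
Qed.

Definition potential x : R := n%:R * harm R (zeros x).

Lemma potential_ge0 x : 0 <= potential x.
Proof. by rewrite mulr_ge0 ?harm_ge0. Qed.

Lemma potential_ones : potential (ones n) = 0.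
Proof. by rewrite /potential zeros_ones mulr0. Qed.

Lemma sum_zeros x : \sum_i ((~~ x i)%:R : R) = (zeros x)%:R.
Proof. by rewrite -natr_sum /zeros -sum1_card [in RHS]big_mkcond. Qed.

Lemma potential_drift x :
  x != ones n -> \sum_y trans R x y * potential y <= potential x - 1.
Proof.
move=> /zeros_gt0 z_gt0; rewrite sum_trans.
have n_gt0 : (0 : R) < n%:R by rewrite ltr0n (leq_trans z_gt0) ?zeros_le.
set z := zeros x in z_gt0 *; set d := harm R z - harm R z.-1.
have step_potential i : potential (step x i) = potential x - (~~ x i)%:R * (n%:R * d).
  rewrite stepE /potential; case: ifP => xi /=; first by rewrite mul0r subr0.
  have -> : zeros (flip x i) = z.-1 by rewrite /z -(zeros_flip xi).
  by rewrite mul1r mulrBr opprB addrC subrK.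
have zd_ge1 : 1 <= z%:R * d.
  have := harm_pred R z_gt0; rewrite -lerBrDl -/d => /(ler_wpM2l (ler0n _ z)).
  by rewrite mulfV // pnatr_eq0 -lt0n.
have sum_step : \sum_i potential (step x i) = potential x *+ n - z%:R * (n%:R * d).
  rewrite (eq_bigr _ (fun i _ => step_potential i)) sumrB sumr_const card_ord.
  by rewrite -mulr_suml sum_zeros.
rewrite sum_step -[potential x *+ n]mulr_natr.
have -> : n%:R^-1 * (potential x * n%:R - z%:R * (n%:R * d)) = potential x - z%:R * d.
  by field; rewrite gt_eqF.
lra.
Qed.

Lemma exp_time_partial_le N :
  (0 < n)%N -> exp_time_partial R n N <= n%:R * (1 + ln n%:R).
Proof.
move=> n_gt0; set M := n%:R * (1 + ln n%:R).
have card_gt0 : (0 : R) < #|{: bits n}|%:R.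
  by rewrite ltr0n; apply/card_gt0P; exists (ones n).
have init_le :
    \sum_y surv R 0 y * potential y <= \sum_(y : bits n) #|{: bits n}|%:R^-1 * M.
  apply: ler_sum => y _; apply: ler_pM; rewrite ?surv_ge0 ?potential_ge0 //=.
    by case: eqP => _; [rewrite invr_ge0 ltW | rewrite lexx].
  by rewrite ler_wpM2l ?harm_le ?zeros_le.
apply: le_trans (additive_drift surv_ge0 surv_ones surv_succ potential_ge0
  potential_ones potential_drift N) (le_trans init_le _).
by rewrite sumr_const -[_ *+ _]mulr_natr mulrAC mulVf ?gt_eqF ?mul1r.
Qed.

End BPAOAZChain.

Theorem theorem3 (R : realType) :
  exists (c : R) (N0 : nat), 0 < c /\
    forall n : nat, ~~ odd n -> (N0 <= n)%N ->
      forall N : nat, exp_time_partial R n N <= c * n%:R * ln (n%:R : R).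
Proof.
exists 3, 2%N; split => // n _ n_ge2 N.
have := exp_time_partial_le R N (ltnW n_ge2).
have := half_le_ln R n_ge2.
have : (0 : R) <= n%:R by [].
set L := ln _; set m : R := n%:R; nra.
Qed.
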